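(* In the setting described in the context, for any $n\ge1$, any $1\le k\le n$ and any $\tau'\in\mathcal{S}_{n-k}$, the set $$\Big\{\tau\in\mathcal{T}_n:\tau\prec\tau',\ \mathcal{I}(\tau)\cap\bigcup_{P\in\mathcal{C}_{n,k}}\Delta(P)\neq\emptyset\Big\}$$ contains at most two vertices.
   Context: Standing setup. Let $s,t>0$ with $s+t=1$, and let $\theta\in\mathbb{R}$ with $\inf_{q\in\mathbb{N}}q^{1/s}\|q\theta\|>0$, where $\|x\|$ is the distance from $x$ to the nearest integer. Let $\beta\in(0,1)$, let $A_0$ be a compact interval of length $l>0$, let $R=16\beta^{-4}$, and let $c=\min\{\inf_{q\in\mathbb{N}}q^{1/s}\|q\theta\|,\ \tfrac14 lR^{-1},\ \tfrac18R^{-2-3/t^2}\}$. Rational points are written $P=(p/q,r/q)$ with $q>0$ and $p,q,r$ coprime integers. Let $\mathcal{C}=\{(p/q,r/q)\in\mathbb{Q}^2:|\theta-p/q|<c/q^{1+s}\}$ and $\Delta(P)=\{y\in\mathbb{R}:|y-r/q|<c/q^{1+t}\}$. Non-vertical rational lines are written $L(A,B,C)=\{(x,y):y=(Ax+C)/B\}$ with $A,B,C$ coprime integers, $B>0$. For each $P=(p/q,r/q)\in\mathcal{C}$ fix a line $L_P=L(A_P,B_P,C_P)$ passing through $P$ with $|A_P|\le q^s$ and $B_P\le q^t$ (such a line exists). Let $H_n=4cl^{-1}R^n$ and $\mathcal{C}_n=\{P=(p/q,r/q)\in\mathcal{C}:H_n\le qB_P<H_{n+1}\}$ for $n\ge1$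 (these partition $\mathcal{C}$). Let $\lambda=3/t^2$, $\mu=1/(t(1+t))$, $\mathcal{C}_{n,1}=\{P\in\mathcal{C}_n:H_{n+1}^{t/(1+t)}R^{-\lambda}\le B_P<H_{n+1}^{t/(1+t)}\}$ and, for $2\le k\le n$, $\mathcal{C}_{n,k}=\{P\in\mathcal{C}_n:H_{n+1}^{t/(1+t)}R^{-\lambda-(k-1)\mu}\le B_P<H_{n+1}^{t/(1+t)}R^{-\lambda-(k-2)\mu}\}$. Let $\mathcal{T}$ be an $[R]$-regular rooted tree with root $\tau_0$ ($[\cdot]$ = integer part), $\mathcal{T}_n$ its vertices of height $n$, and $\tau\prec\tau'$ meaning $\tau'$ is an ancestor of $\tau$ (possibly equal). Fix an injective map $\mathcal{I}$ from $\mathcal{T}$ to closed subintervals of $A_0$ with $|\mathcal{I}(\tau)|=lR^{-n}$ for $\tau\in\mathcal{T}_n$, $\mathcal{I}(\tau)\subset\mathcal{I}(\tau')$ whenever $\tau\prec\tau'$, and such that for each $\tau'$ the intervals $\mathcal{I}(\tau)$ over successors $\tau$ of $\tau'$ have pairwise disjoint interiors and connected union. Define $\mathcal{S}_0=\{\tau_0\}$ and for $n\ge1$, $\mathcal{S}_n=\{\tau:\tau$ is a successor of some vertex in $\mathcal{S}_{n-1}$ and $\mathcal{I}(\tau)\cap\bigcup_{P\in\mathcal{C}_n}\Delta(P)=\emptyset\}$. *)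

From Stdlib Require Import Reals Lra Lia ZArith List.
Open Scope R_scope.

Definition floorZ (x : R) : Z := (up x - 1)%Z.

Definition dnint (x : R) : R :=
  Rmin (x - IZR (floorZ x)) (IZR (floorZ x) + 1 - x).

Definition is_glb (E : R -> Prop) (m : R) : Prop :=
  (forall v, E v -> m <= v) /\ (forall m', (forall v, E v -> m' <= v) -> m' <= m).

Definition dioph_set (s theta : R) (v : R) : Prop :=
  exists q : nat, (1 <= q)%nat /\ v = Rpower (INR q) (1 / s) * dnint (INR q * theta).

Definition Rc (beta : R) : R := 16 / beta ^ 4.

Definition cc (kappa l beta t : R) : R :=
  Rmin kappa (Rmin (l / (4 * Rc beta)) (/ 8 * Rpower (Rc beta) (-2 - 3 / t ^ 2))).

(* A rational point P = (p/q, r/q) is encoded by the triple (p,q,r) with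
   q > 0 and gcd(p,q,r) = 1. *)
Definition pt_p (P : Z * Z * Z) : Z := fst (fst P).
Definition pt_q (P : Z * Z * Z) : Z := snd (fst P).
Definition pt_r (P : Z * Z * Z) : Z := snd P.

Definition ratpt (P : Z * Z * Z) : Prop :=
  (0 < pt_q P)%Z /\ Z.gcd (Z.gcd (pt_p P) (pt_q P)) (pt_r P) = 1%Z.

Definition inC (s theta c : R) (P : Z * Z * Z) : Prop :=
  ratpt P /\
  Rabs (theta - IZR (pt_p P) / IZR (pt_q P)) < c / Rpower (IZR (pt_q P)) (1 + s).

Definition inDelta (t c : R) (P : Z * Z * Z) (y : R) : Prop :=
  Rabs (y - IZR (pt_r P) / IZR (pt_q P)) < c / Rpower (IZR (pt_q P)) (1 + t).

(* A non-vertical rational line L(A,B,C) = {y = (Ax+C)/B} encoded by (A,B,C),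
   with A,B,C coprime and B > 0. *)
Definition ln_A (L : Z * Z * Z) : Z := fst (fst L).
Definition ln_B (L : Z * Z * Z) : Z := snd (fst L).
Definition ln_C (L : Z * Z * Z) : Z := snd L.

Definition line_ok (L : Z * Z * Z) : Prop :=
  (0 < ln_B L)%Z /\ Z.gcd (Z.gcd (ln_A L) (ln_B L)) (ln_C L) = 1%Z.

(* (p/q, r/q) lies on y = (Ax+C)/B  iff  B r = A p + C q  (q, B > 0) *)
Definition passes (L P : Z * Z * Z) : Prop :=
  (ln_B L * pt_r P = ln_A L * pt_p P + ln_C L * pt_q P)%Z.

Definition LP_ok (s t theta c : R) (LP : Z * Z * Z -> Z * Z * Z) : Prop :=
  forall P, inC s theta c P ->
    line_ok (LP P) /\ passes (LP P) P /\
    IZR (Z.abs (ln_A (LP P))) <= Rpower (IZR (pt_q P)) s /\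
    IZR (ln_B (LP P)) <= Rpower (IZR (pt_q P)) t .

Definition Hn (c l beta : R) (n : nat) : R := 4 * c / l * Rc beta ^ n.

Definition inCn (s theta c l beta : R) (LP : Z * Z * Z -> Z * Z * Z) (n : nat)
  (P : Z * Z * Z) : Prop :=
  inC s theta c P /\
  Hn c l beta n <= IZR (pt_q P * ln_B (LP P)) < Hn c l beta (S n).

Definition inCnk (s t theta c l beta : R) (LP : Z * Z * Z -> Z * Z * Z)
  (n k : nat) (P : Z * Z * Z) : Prop :=
  let lam := 3 / t ^ 2 in
  let mu := 1 / (t * (1 + t)) in
  let h := Rpower (Hn c l beta (S n)) (t / (1 + t)) in
  let B := IZR (ln_B (LP P)) in
  inCn s theta c l beta LP n P /\
  (if (k =? 1)%nat then h * Rpower (Rc beta) (- lam) <= B < h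
   else h * Rpower (Rc beta) (- lam - INR (k - 1) * mu) <= B
        < h * Rpower (Rc beta) (- lam - INR (k - 2) * mu)).

(* The [R]-regular rooted tree: vertices are words over {0,...,[R]-1};
   the root is the empty word, the height is the length, the successors
   of tau' are tau' ++ [i], and tau is a descendant of tau' (tau ≺ tau')
   iff tau' is a prefix of tau. *)
Definition deg (beta : R) : nat := Z.to_nat (floorZ (Rc beta)).

Definition vertex (beta : R) (tau : list nat) : Prop :=
  Forall (fun i => (i < deg beta)%nat) tau.

Definition prec (tau tau' : list nat) : Prop := exists u, tau = tau' ++ u.

(* intervals: (a, b) stands for the closed interval [a, b] *)
Definition inI (J : R * R) (x : R) : Prop := fst J <= x <= snd J.

Definition I_ok (beta a0 l : R) (I : list nat -> R * R) : Prop :=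
  (forall tau, vertex beta tau ->
     snd (I tau) - fst (I tau) = l / Rc beta ^ length tau /\
     a0 <= fst (I tau) /\ snd (I tau) <= a0 + l) /\
  (forall tau1 tau2, vertex beta tau1 -> vertex beta tau2 ->
     I tau1 = I tau2 -> tau1 = tau2) /\
  (forall tau tau', vertex beta tau -> vertex beta tau' -> prec tau tau' ->
     fst (I tau') <= fst (I tau) /\ snd (I tau) <= snd (I tau')) /\
  (forall tau', vertex beta tau' -> forall i j,
     (i < deg beta)%nat -> (j < deg beta)%nat -> i <> j ->
     forall x, ~ (fst (I (tau' ++ i :: nil)) < x < snd (I (tau' ++ i :: nil)) /\
                  fst (I (tau' ++ j :: nil)) < x < snd (I (tau' ++ j :: nil)))) /\
  (forall tau', vertex beta tau' -> forall x y z, x <= y <= z ->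
     (exists i, (i < deg beta)%nat /\ inI (I (tau' ++ i :: nil)) x) ->
     (exists i, (i < deg beta)%nat /\ inI (I (tau' ++ i :: nil)) z) ->
     (exists i, (i < deg beta)%nat /\ inI (I (tau' ++ i :: nil)) y)).

Fixpoint inS (s t theta c l beta : R) (LP : Z * Z * Z -> Z * Z * Z)
  (I : list nat -> R * R) (n : nat) (tau : list nat) : Prop :=
  match n with
  | O => tau = nil
  | S m => exists tau' i, (i < deg beta)%nat /\ tau = tau' ++ i :: nil /\
      inS s t theta c l beta LP I m tau' /\
      (forall P, inCn s theta c l beta LP (S m) P ->
         forall y, inI (I tau) y -> ~ inDelta t c P y)
  end.

(* Let P, P' in C_{n,k} have Delta(P), Delta(P') meeting I(tau').
   Both lie in the band H_{n+1}/R <= qB < H_{n+1} and their Delta's are within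
   |I(tau')| = 4cR^{k+1}/H_{n+1} of each other.  We show L_P = L_{P'}:
   - k = 1: the denominators B, B' agree up to R^lambda and an integer of
     absolute value < 1 shows that each point lies on the other's line; two
     points determine a line ([first_window_same_line]);
   - k >= 2: if the lines are parallel they coincide, since their ordinates at
     theta differ by less than 1/(B B'); otherwise they meet at a rational point
     of C of height below H_{n-k+1} whose Delta contains a point of I(tau'),
     contradicting tau' in S_{n-k} ([later_window_same_line]).
   So all the Delta(P) lie within l/(2R^n) of the ordinate of a single line at
   theta, i.e. in an open interval of length l/R^n, which meets at most two of
   the side-by-side intervals I(tau) of length l/R^n ([three_intervals]). *)

From Stdlib Require Import Reals Lra Lia ZArith List.
Open Scope R_scope.

(** * Integer geometry of primitive triples *)

(* Two primitive triples (a, b, c), (a', b', c') with positive middle entries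
   that are proportional are equal: the middle entries divide each other. *)
Lemma primitive_triple_unique (a b c a' b' c' : Z) :
  (0 < b)%Z -> (0 < b')%Z ->
  Z.gcd (Z.gcd a b) c = 1%Z -> Z.gcd (Z.gcd a' b') c' = 1%Z ->
  (a * b' = a' * b)%Z -> (c * b' = c' * b)%Z ->
  a = a' /\ b = b' /\ c = c'.
Proof.
  intros hb hb' g g' e1 e2.
  (* b' = gcd(a b', b b', c b') and b divides all three *)
  assert (b_dvd : (b | b')%Z).
  { assert (H : Z.gcd (Z.gcd (a * b') (b * b')) (c * b') = b').
    { rewrite !Z.gcd_mul_mono_r_nonneg by lia. rewrite g. lia. }
    rewrite <- H. apply Z.gcd_greatest; [apply Z.gcd_greatest|].
    - exists a'; nia.
    - exists b'; nia.
    - exists c'; nia. }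
  assert (b'_dvd : (b' | b)%Z).
  { assert (H : Z.gcd (Z.gcd (a' * b) (b' * b)) (c' * b) = b).
    { rewrite !Z.gcd_mul_mono_r_nonneg by lia. rewrite g'. lia. }
    rewrite <- H. apply Z.gcd_greatest; [apply Z.gcd_greatest|].
    - exists a; nia.
    - exists b; nia.
    - exists c; nia. }
  assert (eb : b = b') by (apply Z.divide_antisym_nonneg; auto; lia).
  subst b'. split; [|split]; auto.
  - apply Z.mul_cancel_r with b; lia.
  - apply Z.mul_cancel_r with b; lia.
Qed.

Lemma triple_eta (x : Z * Z * Z) : x = ((fst (fst x), snd (fst x)), snd x).
Proof. destruct x as [[a b] c]; reflexivity. Qed.

Lemma line_eq_of_proportional (L L' : Z * Z * Z) : line_ok L -> line_ok L' ->
  (ln_A L * ln_B L' = ln_A L' * ln_B L)%Z ->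
  (ln_C L * ln_B L' = ln_C L' * ln_B L)%Z -> L = L'.
Proof.
  unfold line_ok, ln_A, ln_B, ln_C. intros [h1 g1] [h2 g2] e1 e2.
  destruct (primitive_triple_unique _ _ _ _ _ _ h1 h2 g1 g2 e1 e2) as [? [? ?]].
  rewrite (triple_eta L), (triple_eta L'). congruence.
Qed.

Lemma point_eq_of_proportional (P P' : Z * Z * Z) : ratpt P -> ratpt P' ->
  (pt_p P * pt_q P' = pt_p P' * pt_q P)%Z ->
  (pt_r P * pt_q P' = pt_r P' * pt_q P)%Z -> P = P'.
Proof.
  unfold ratpt, pt_p, pt_q, pt_r. intros [h1 g1] [h2 g2] e1 e2.
  destruct (primitive_triple_unique _ _ _ _ _ _ h1 h2 g1 g2 e1 e2) as [? [? ?]].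
  rewrite (triple_eta P), (triple_eta P'). congruence.
Qed.

Lemma two_points_one_line (P1 P2 L L' : Z * Z * Z) :
  ratpt P1 -> ratpt P2 -> line_ok L -> line_ok L' ->
  passes L P1 -> passes L P2 -> passes L' P1 -> passes L' P2 ->
  P1 = P2 \/ L = L'.
Proof.
  intros hP1 hP2 hL hL' e1 e2 e3 e4.
  pose proof hP1 as [q1p _]. pose proof hP2 as [q2p _].
  pose proof hL as [b1p _]. pose proof hL' as [b2p _].
  unfold passes in *.
  set (p1 := pt_p P1) in *. set (q1 := pt_q P1) in *. set (r1 := pt_r P1) in *.
  set (p2 := pt_p P2) in *. set (q2 := pt_q P2) in *. set (r2 := pt_r P2) in *.
  set (A := ln_A L) in *. set (B := ln_B L) in *. set (C := ln_C L) in *.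
  set (A' := ln_A L') in *. set (B' := ln_B L') in *. set (C' := ln_C L') in *.
  (* both lines annihilate the direction vector (dx, dy) of P1 P2 *)
  set (dx := (p1 * q2 - p2 * q1)%Z). set (dy := (r1 * q2 - r2 * q1)%Z).
  assert (f1 : (A * dx = B * dy)%Z) by (unfold dx, dy; nia).
  assert (f2 : (A' * dx = B' * dy)%Z) by (unfold dx, dy; nia).
  destruct (Z.eq_dec dx 0) as [h0|h0].
  - left. rewrite h0 in f1. assert (dy = 0%Z) by nia.
    apply point_eq_of_proportional; auto; unfold dx, dy, p1, q1, r1, p2, q2, r2 in *; lia.
  - right. assert (slope : (A * B' = A' * B)%Z).
    { apply Z.mul_cancel_r with dx; auto.
      transitivity (B * dy * B')%Z; [nia|]. rewrite <- f1. nia. }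
    apply line_eq_of_proportional; auto. fold A B C A' B' C'.
    apply Z.mul_cancel_r with q1; [lia|].
    transitivity (B * B' * r1 - (A * B') * p1)%Z; [nia|]. rewrite slope. nia.
Qed.

Lemma reduced_point (X Y D : Z) : D <> 0%Z ->
  exists P, ratpt P /\ (pt_q P <= Z.abs D)%Z /\
    IZR (pt_p P) / IZR (pt_q P) = IZR X / IZR D /\
    IZR (pt_r P) / IZR (pt_q P) = IZR Y / IZR D.
Proof.
  intros hD.
  set (p0 := (Z.sgn D * X)%Z). set (r0 := (Z.sgn D * Y)%Z). set (d := Z.abs D).
  assert (dpos : (0 < d)%Z) by (unfold d; lia).
  set (g := Z.gcd (Z.gcd p0 d) r0).
  assert (gpos : (0 < g)%Z).
  { assert (0 <= g)%Z by apply Z.gcd_nonneg.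
    assert (g <> 0)%Z; [|lia].
    intro h. apply Z.gcd_eq_0 in h. destruct h as [h _]. apply Z.gcd_eq_0 in h. lia. }
  assert (gd : (g | Z.gcd p0 d)%Z) by apply Z.gcd_divide_l.
  assert (gp : (g | p0)%Z) by (eapply Z.divide_trans; [exact gd| apply Z.gcd_divide_l]).
  assert (gdd : (g | d)%Z) by (eapply Z.divide_trans; [exact gd| apply Z.gcd_divide_r]).
  assert (gr : (g | r0)%Z) by apply Z.gcd_divide_r.
  exists ((p0 / g, d / g), r0 / g)%Z.
  unfold ratpt, pt_p, pt_q, pt_r; simpl.
  destruct gp as [a ha]. destruct gdd as [b hb]. destruct gr as [e he].
  assert (ea : (p0 / g = a)%Z) by (rewrite ha; apply Z.div_mul; lia).
  assert (eb : (d / g = b)%Z) by (rewrite hb; apply Z.div_mul; lia).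
  assert (ee : (r0 / g = e)%Z) by (rewrite he; apply Z.div_mul; lia).
  assert (bpos : (0 < b)%Z) by nia.
  assert (gR : IZR g > 0) by (apply IZR_lt; lia).
  assert (bR : IZR b > 0) by (apply IZR_lt; lia).
  assert (sD : IZR (Z.sgn D) <> 0) by (apply not_0_IZR; destruct D; simpl; lia).
  assert (DR : IZR D <> 0) by (apply not_0_IZR; auto).
  assert (sgn_frac : forall Z0, IZR (Z.sgn D * Z0) / IZR d = IZR Z0 / IZR D).
  { intros Z0. unfold d. rewrite <- Z.sgn_abs, !mult_IZR. field. auto. }
  split; [split|split;[|split]].
  - lia.
  - rewrite Z.gcd_div_factor; try lia.
    2, 3: unfold g; auto with zarith.
    + rewrite Z.gcd_div_factor; try lia; auto.
      * fold g. apply Z.div_same. lia.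
      * apply Z.gcd_divide_r.
    + exists a; lia.
    + exists b; lia.
  - rewrite eb. nia.
  - rewrite ea, eb, <- sgn_frac. fold p0.
    rewrite ha, hb, !mult_IZR. field. lra.
  - rewrite ee, eb, <- sgn_frac. fold r0.
    rewrite he, hb, !mult_IZR. field. lra.
Qed.

(** * The tree, its intervals and the surviving sets S_n *)

Lemma Rc_gt_16 (beta : R) : 0 < beta < 1 -> 16 < Rc beta.
Proof.
  intros [h1 h2]. unfold Rc.
  assert (0 < beta ^ 4) by (apply pow_lt; lra).
  assert (beta ^ 4 < 1) by (apply pow_lt_1_compat; [lra|lia]).
  apply Rmult_lt_reg_r with (beta ^ 4); auto.
  unfold Rdiv. rewrite Rmult_assoc, Rinv_l by lra. nra.
Qed.

Lemma common_prefix (a b : list nat) : length a = length b -> a <> b ->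
  exists u i j v w, i <> j /\ a = u ++ i :: v /\ b = u ++ j :: w.
Proof.
  revert b; induction a as [|x a IH]; intros b hl hne; destruct b as [|y b];
    simpl in *; try congruence.
  destruct (Nat.eq_dec x y) as [e|e].
  - subst y. destruct (IH b) as (u & i & j & v & w & h1 & h2 & h3); try congruence.
    exists (x :: u), i, j, v, w. subst. auto.
  - exists nil, x, y, a, b. auto.
Qed.

Lemma vertex_prec beta tau tau' : vertex beta tau -> prec tau tau' -> vertex beta tau'.
Proof.
  intros v [u e]; subst. unfold vertex in *. apply Forall_app in v; tauto.
Qed.

Lemma vertex_last beta u i : vertex beta (u ++ i :: nil) -> (i < deg beta)%nat.
Proof.
  unfold vertex. intros v. apply Forall_app in v. destruct v as [_ h]. inversion h; auto.
Qed.

Lemma inS_vertex s t theta c l beta LP I N tau :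
  inS s t theta c l beta LP I N tau -> vertex beta tau /\ length tau = N.
Proof.
  revert tau; induction N as [|N IH]; simpl; intros tau h.
  - subst. split; [constructor|reflexivity].
  - destruct h as (tau0 & i & hi & e & h & _). subst.
    destruct (IH _ h) as [v hl]. split.
    + apply Forall_app; split; auto.
    + rewrite length_app; simpl; lia.
Qed.

Lemma I_mono beta a0 l I tau tau' y : I_ok beta a0 l I ->
  vertex beta tau -> vertex beta tau' -> prec tau tau' ->
  inI (I tau) y -> inI (I tau') y.
Proof.
  intros (_ & _ & hn & _) v v' p [h1 h2].
  destruct (hn tau tau' v v' p). split; lra.
Qed.

Lemma I_length beta a0 l I tau : I_ok beta a0 l I -> vertex beta tau ->
  snd (I tau) - fst (I tau) = l / Rc beta ^ length tau.
Proof. intros (hsz & _) v. apply (hsz tau v). Qed.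

(* Distinct vertices of the same height have intervals lying side by side:
   below their branching point they sit in children with disjoint interiors. *)
Lemma I_separated beta a0 l I tau1 tau2 : 0 < beta < 1 -> 0 < l -> I_ok beta a0 l I ->
  vertex beta tau1 -> vertex beta tau2 -> length tau1 = length tau2 -> tau1 <> tau2 ->
  snd (I tau1) <= fst (I tau2) \/ snd (I tau2) <= fst (I tau1).
Proof.
  intros hb hl hI v1 v2 hlen hne.
  pose proof (Rc_gt_16 beta hb) as hR.
  destruct (common_prefix _ _ hlen hne) as (u & i & j & v & w & hij & e1 & e2).
  pose proof hI as (_ & _ & hn & hd & _).
  assert (p1 : prec tau1 (u ++ i :: nil)) by (exists v; rewrite e1, <- app_assoc; reflexivity).
  assert (p2 : prec tau2 (u ++ j :: nil)) by (exists w; rewrite e2, <- app_assoc; reflexivity).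
  assert (vi := vertex_prec _ _ _ v1 p1). assert (vj := vertex_prec _ _ _ v2 p2).
  assert (vu : vertex beta u) by (apply vertex_prec with (u ++ i :: nil); auto; exists (i :: nil); auto).
  destruct (hn tau1 _ v1 vi p1) as [n1 n2].
  destruct (hn tau2 _ v2 vj p2) as [n3 n4].
  assert (pos : forall tau, vertex beta tau -> fst (I tau) < snd (I tau)).
  { intros tau vt. pose proof (I_length _ a0 l I tau hI vt).
    assert (0 < l / Rc beta ^ length tau) by (apply Rdiv_lt_0_compat; auto; apply pow_lt; lra).
    lra. }
  pose proof (pos _ v1). pose proof (pos _ v2).
  destruct (Rle_dec (snd (I tau1)) (fst (I tau2))) as [h|h]; [left; auto|].
  destruct (Rle_dec (snd (I tau2)) (fst (I tau1))) as [h'|h']; [right; auto|].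
  exfalso.
  (* otherwise the midpoint of the overlap is interior to both children *)
  set (x := (Rmax (fst (I tau1)) (fst (I tau2)) + Rmin (snd (I tau1)) (snd (I tau2))) / 2).
  apply (hd u vu i j (vertex_last _ _ _ vi) (vertex_last _ _ _ vj) hij x).
  unfold x, Rmax, Rmin.
  destruct (Rle_dec (fst (I tau1)) (fst (I tau2)));
  destruct (Rle_dec (snd (I tau1)) (snd (I tau2))); lra.
Qed.

Lemma inS_avoids s t theta c l beta LP I a0 N tau : I_ok beta a0 l I ->
  inS s t theta c l beta LP I N tau ->
  forall m P y, (1 <= m <= N)%nat -> inCn s theta c l beta LP m P ->
  inI (I tau) y -> ~ inDelta t c P y.
Proof.
  intros hI. revert tau; induction N as [|N IH]; intros tau h m P y hm hP hy.
  - lia.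
  - pose proof (inS_vertex _ _ _ _ _ _ _ _ _ _ h) as [vt _].
    simpl in h. destruct h as (tau0 & i & hi & e & h0 & hc).
    destruct (Nat.eq_dec m (S N)) as [em|em].
    + subst m. apply (hc P hP y hy).
    + apply (IH tau0 h0 m P y); [lia|auto|].
      pose proof (inS_vertex _ _ _ _ _ _ _ _ _ _ h0) as [v0 _].
      apply I_mono with beta a0 l tau; auto. exists (i :: nil). auto.
Qed.

Lemma Hn_band c l beta (N : nat) (X : R) : Hn c l beta 1 <= X -> X < Hn c l beta (S N) ->
  exists m, (1 <= m <= N)%nat /\ Hn c l beta m <= X < Hn c l beta (S m).
Proof.
  induction N as [|N IH]; intros h1 h2.
  - lra.
  - destruct (Rlt_dec X (Hn c l beta (S N))) as [h|h].
    + destruct (IH h1 h) as (m & hm & hx). exists m. split; [lia|auto].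
    + exists (S N). split; [lia|split; lra].
Qed.

Lemma three_intervals (h Y : R) (J1 J2 J3 : R * R) (y1 y2 y3 : R) :
  snd J1 - fst J1 = h -> snd J2 - fst J2 = h -> snd J3 - fst J3 = h ->
  inI J1 y1 -> inI J2 y2 -> inI J3 y3 ->
  Rabs (y1 - Y) < h / 2 -> Rabs (y2 - Y) < h / 2 -> Rabs (y3 - Y) < h / 2 ->
  (snd J1 <= fst J2 \/ snd J2 <= fst J1) -> (snd J1 <= fst J3 \/ snd J3 <= fst J1) ->
  (snd J2 <= fst J3 \/ snd J3 <= fst J2) -> False.
Proof.
  unfold inI. intros l1 l2 l3 i1 i2 i3 d1 d2 d3 s12 s13 s23.
  apply Rabs_def2 in d1. apply Rabs_def2 in d2. apply Rabs_def2 in d3.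
  destruct s12, s13, s23; lra.
Qed.

Lemma Rpower_pos x y : 0 < Rpower x y.
Proof. unfold Rpower. apply exp_pos. Qed.

Lemma Rpower_1plus q e : 0 < q -> Rpower q (1 + e) = q * Rpower q e.
Proof. intros h. rewrite Rpower_plus, Rpower_1; auto. Qed.

(* x^s <= max(1, x) <= 1 + x for exponents 0 <= s <= 1. *)
Lemma Rpower_le_1plus x s : 0 < x -> 0 <= s <= 1 -> Rpower x s <= 1 + x.
Proof.
  intros hx hs. unfold Rpower.
  destruct (Rle_dec x 1) as [h|h].
  - assert (ln x <= 0).
    { destruct (Req_dec x 1) as [e|e]. subst; rewrite ln_1; lra.
      left. rewrite <- ln_1. apply ln_increasing; lra. }
    assert (exp (s * ln x) <= exp 0).
    { destruct (Req_dec (s * ln x) 0) as [e|e]. rewrite e; lra.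
      left; apply exp_increasing. nra. }
    rewrite exp_0 in *. lra.
  - assert (0 <= ln x) by (left; rewrite <- ln_1; apply ln_increasing; lra).
    assert (exp (s * ln x) <= exp (ln x)).
    { destruct (Req_dec (s * ln x) (ln x)) as [e|e]. rewrite e; lra.
      left; apply exp_increasing. nra. }
    rewrite exp_ln in *; lra.
Qed.

Lemma lt_div_mul a b c : 0 < b -> a < c / b -> a * b < c.
Proof.
  intros hb h. apply Rmult_lt_reg_r with (/ b); [apply Rinv_0_lt_compat; auto|].
  rewrite Rmult_assoc, Rinv_r by apply (Rgt_not_eq _ _ hb). unfold Rdiv in h. lra.
Qed.

Lemma lt_div_of_mul a b c : 0 < b -> a * b < c -> a < c / b.
Proof.
  intros hb h. apply Rmult_lt_reg_r with b; auto.
  unfold Rdiv. rewrite Rmult_assoc, Rinv_l, Rmult_1_r by apply (Rgt_not_eq _ _ hb). exact h.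
Qed.

Lemma le_div_mul a b c : 0 < b -> a <= c / b -> a * b <= c.
Proof.
  intros hb h. apply Rmult_le_reg_r with (/ b); [apply Rinv_0_lt_compat; auto|].
  rewrite Rmult_assoc, Rinv_r by apply (Rgt_not_eq _ _ hb). unfold Rdiv in h. lra.
Qed.

Lemma exp_le a b : a <= b -> exp a <= exp b.
Proof. intros [h|h]; [left; apply exp_increasing; auto| subst; lra]. Qed.

Lemma exp_le_1 a : a <= 0 -> exp a <= 1.
Proof. intros h. rewrite <- exp_0. apply exp_le. exact h. Qed.

Lemma ln_le x y : 0 < x -> x <= y -> ln x <= ln y.
Proof. intros hx [h|h]; [left; apply ln_increasing; auto| subst; lra]. Qed.

Lemma exp_ln_lt x a : 0 < x -> ln x < a -> x < exp a.
Proof. intros hx h. rewrite <- (exp_ln x) by auto. apply exp_increasing; auto. Qed.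

Lemma mul_lt_exp x y a b : 0 <= x -> 0 <= y -> x < exp a -> y < exp b -> x * y < exp (a + b).
Proof.
  intros hx hy h1 h2. rewrite exp_plus.
  apply Rle_lt_trans with (exp a * y).
  - apply Rmult_le_compat_r; lra.
  - apply Rmult_lt_compat_l; auto. apply exp_pos.
Qed.

Lemma exp_mul_ln2 (n : nat) : exp (INR n * ln 2) = 2 ^ n.
Proof. apply (Rpower_pow n 2). lra. Qed.

(** * Points of C close to their lines *)

Definition line_at (theta : R) (L : Z * Z * Z) : R :=
  (IZR (ln_A L) * theta + IZR (ln_C L)) / IZR (ln_B L).

Definition fits (s t theta c : R) (P L : Z * Z * Z) : Prop :=
  inC s theta c P /\ line_ok L /\ passes L P /\
  IZR (Z.abs (ln_A L)) <= Rpower (IZR (pt_q P)) s /\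
  IZR (ln_B L) <= Rpower (IZR (pt_q P)) t.

Lemma LP_fits s t theta c LP P : LP_ok s t theta c LP -> inC s theta c P ->
  fits s t theta c P (LP P).
Proof. intros hLP hC. destruct (hLP P hC) as (? & ? & ? & ?). split; auto. Qed.

Lemma fits_real s t theta c P L : fits s t theta c P L ->
  1 <= IZR (pt_q P) /\ 1 <= IZR (ln_B L) /\
  IZR (ln_B L) * IZR (pt_r P) = IZR (ln_A L) * IZR (pt_p P) + IZR (ln_C L) * IZR (pt_q P) /\
  Rabs (IZR (ln_A L)) <= Rpower (IZR (pt_q P)) s /\
  IZR (ln_B L) <= Rpower (IZR (pt_q P)) t /\
  Rabs (theta - IZR (pt_p P) / IZR (pt_q P)) < c / Rpower (IZR (pt_q P)) (1 + s).
Proof.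
  intros ([[hq _] hth] & [hB _] & hp & hA & hBt).
  unfold passes in hp. rewrite <- abs_IZR.
  repeat split; auto; try (apply IZR_le; lia).
  rewrite <- !mult_IZR, <- plus_IZR. f_equal. exact hp.
Qed.

(* If P fits L and y is in Delta(P), then y is within 2c/(qB) of the ordinate of L
   at theta: the slope |A| <= q^s turns |theta - p/q| into an error c/(qB) and
   B <= q^t bounds the radius of Delta(P) by c/(qB). *)
Lemma near_line_value s t theta c P L y : 0 < c -> fits s t theta c P L ->
  inDelta t c P y -> Rabs (y - line_at theta L) < 2 * c / (IZR (pt_q P) * IZR (ln_B L)).
Proof.
  intros hc hf hy. unfold inDelta in hy.
  destruct (fits_real _ _ _ _ _ _ hf) as (hq & hB & e & hA & hBt & hth).
  unfold line_at.
  set (p := IZR (pt_p P)) in *. set (q := IZR (pt_q P)) in *. set (r := IZR (pt_r P)) in *.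
  set (A := IZR (ln_A L)) in *. set (B := IZR (ln_B L)) in *. set (C := IZR (ln_C L)) in *.
  rewrite Rpower_1plus in hth, hy by lra.
  pose proof (Rpower_pos q s). pose proof (Rpower_pos q t).
  assert (on_line : Rabs (r / q - (A * theta + C) / B) <= c / (q * B)).
  { replace (r / q - (A * theta + C) / B) with (A * (p / q - theta) / B).
    2:{ apply Rmult_eq_reg_r with (q * B); [|nra]. field_simplify; lra. }
    unfold Rdiv. rewrite !Rabs_mult, (Rabs_inv B), (Rabs_right B), Rabs_minus_sym by lra.
    assert (Rabs (theta - p * / q) <= c / (q * Rpower q s)) by (unfold Rdiv in *; lra).
    apply Rle_trans with (Rpower q s * (c / (q * Rpower q s)) * / B).
    - apply Rmult_le_compat_r; [left; apply Rinv_0_lt_compat; lra|].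
      apply Rmult_le_compat; auto using Rabs_pos.
    - right. field. split; lra. }
  assert (radius : c / (q * Rpower q t) <= c / (q * B)).
  { apply Rmult_le_compat_l; [lra|]. apply Rinv_le_contravar; nra. }
  pose proof (Rabs_triang (y - r / q) (r / q - (A * theta + C) / B)).
  replace (y - r / q + (r / q - (A * theta + C) / B)) with (y - (A * theta + C) / B) in * by ring.
  unfold Rdiv in *. lra.
Qed.

Lemma near_line_value_band s t theta c P L y RR H : 0 < c -> 0 < RR -> 0 < H ->
  H / RR <= IZR (pt_q P) * IZR (ln_B L) -> fits s t theta c P L ->
  inDelta t c P y -> Rabs (y - line_at theta L) < 2 * c * RR / H.
Proof.
  intros hc hR hH hband hf hy.
  eapply Rlt_le_trans; [apply (near_line_value _ _ _ _ _ _ _ hc hf hy)|].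
  assert (0 < H / RR) by (apply Rdiv_lt_0_compat; auto).
  replace (2 * c * RR / H) with (2 * c / (H / RR)) by (field; lra).
  apply Rmult_le_compat_l; [lra|]. apply Rinv_le_contravar; lra.
Qed.

(** * The first window (k = 1) *)

Lemma band_ratio RR H X Q1 b1 Q2 b2 : 0 < RR -> 0 < Q1 -> 0 < b2 ->
  H / RR <= Q1 * b1 -> Q2 * b2 < H -> b1 < X * b2 -> Q2 < RR * X * Q1.
Proof.
  intros hR hQ1 hb2 h1 h2 hX.
  assert (H <= RR * (Q1 * b1)).
  { replace H with (RR * (H / RR)) by (field; lra). apply Rmult_le_compat_l; lra. }
  assert (Q2 * b2 < RR * X * Q1 * b2); [|nra].
  apply Rlt_le_trans with (RR * (Q1 * b1)); [lra|].
  replace (RR * X * Q1 * b2) with (RR * Q1 * (X * b2)) by ring.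
  rewrite <- Rmult_assoc. apply Rmult_le_compat_l; [nra|lra].
Qed.

Lemma delta_radius s t theta c P L y : 0 < c -> fits s t theta c P L -> inDelta t c P y ->
  Rabs (IZR (pt_r P) / IZR (pt_q P) - y) < c / (IZR (pt_q P) * IZR (ln_B L)).
Proof.
  intros hc hf hy. destruct (fits_real _ _ _ _ _ _ hf) as (hq & hB & _ & _ & hBt & _).
  unfold inDelta in hy. rewrite Rabs_minus_sym. eapply Rlt_le_trans; [exact hy|].
  rewrite Rpower_1plus by lra. apply Rmult_le_compat_l; [lra|].
  apply Rinv_le_contravar; nra.
Qed.

Lemma integer_small_zero (N : Z) : Rabs (IZR N) < 1 -> N = 0%Z.
Proof.
  intros h. destruct (Z.eq_dec N 0) as [e|e]; auto. exfalso.
  assert (1 <= Rabs (IZR N)); [rewrite <- abs_IZR; apply IZR_le; lia|lra].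
Qed.

(* The value part of the residual below: q2 B1 (e1 + e2 + e3), where e1, e2, e3
   are the distances r2/q2 ~ y2 ~ y1 ~ Y1, weighted by B1 <= X B2, q2 B1 <= X H
   and q2 <= R X q1. *)
Lemma value_term_bound (Q1 Q2 b1 b2 c RR X H e1 e2 e3 : R) :
  1 <= Q1 -> 1 <= Q2 -> 1 <= b1 -> 1 <= b2 -> 0 < c -> 16 <= RR -> 1 <= X ->
  0 <= e1 -> 0 <= e2 -> 0 <= e3 ->
  e1 * (Q2 * b2) < c -> e2 * H <= 4 * c * RR ^ 2 -> e3 * (Q1 * b1) < 2 * c ->
  b1 < X * b2 -> Q2 * b2 < H -> Q2 < RR * X * Q1 ->
  Q2 * b1 * (e1 + e2 + e3) < c * X + 4 * c * RR ^ 2 * X + 2 * c * RR * X.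
Proof.
  intros hQ1 hQ2 hb1 hb2 hc hR hX he1 he2 he3 f1 f2 f3 hb12 hQb hQ.
  assert (0 <= Q2 * e1) by nra. assert (0 <= b1 * e2) by nra. assert (0 <= b1 * e3) by nra.
  assert (Q2 * b1 * e1 <= X * (e1 * (Q2 * b2))) by nra.
  assert (Q2 * b1 <= X * H).
  { apply Rle_trans with (X * (Q2 * b2)); [nra|]. apply Rmult_le_compat_l; lra. }
  assert (Q2 * b1 * e2 <= X * (e2 * H)) by nra.
  assert (Q2 * b1 * e3 <= RR * X * (e3 * (Q1 * b1))) by nra.
  assert (0 < RR * X) by nra.
  nra.
Qed.

(* The slope part of the residual: q2 |A1| |theta - p2/q2| < c q1^s / q2^s,
   and q1^s / q2^s <= 1 + q1/q2 <= 1 + K when q1 <= K q2. *)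
Lemma slope_term_bound (s Q1 Q2 a e c K : R) :
  0 <= s <= 1 -> 1 <= Q1 -> 1 <= Q2 -> 0 <= K -> 0 <= e ->
  Rabs a <= Rpower Q1 s -> e * (Q2 * Rpower Q2 s) < c -> Q1 < K * Q2 ->
  Q2 * (Rabs a * e) < c * (1 + K).
Proof.
  intros hs hQ1 hQ2 hK he ha hth hQ.
  pose proof (Rpower_pos Q2 s) as ps.
  assert (ratio : Rpower Q1 s <= (1 + K) * Rpower Q2 s).
  { replace (Rpower Q1 s) with (Rpower (Q1 / Q2) s * Rpower Q2 s).
    - apply Rmult_le_compat_r; [lra|]. eapply Rle_trans.
      + apply Rpower_le_1plus; [apply Rdiv_lt_0_compat|]; lra.
      + apply Rplus_le_compat_l. apply Rmult_le_reg_r with Q2; [lra|].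
        unfold Rdiv. rewrite Rmult_assoc, Rinv_l by lra. lra.
    - rewrite Rpower_mult_distr by (try apply Rdiv_lt_0_compat; lra).
      f_equal. field. lra. }
  apply Rle_lt_trans with ((1 + K) * (e * (Q2 * Rpower Q2 s))).
  - apply Rle_trans with (Q2 * ((1 + K) * Rpower Q2 s * e)).
    + apply Rmult_le_compat_l; [lra|]. apply Rmult_le_compat_r; lra.
    + right. ring.
  - rewrite (Rmult_comm c). apply Rmult_lt_compat_l; lra.
Qed.

(* In the first window the two lines have denominators within the factor
   X = R^lambda of each other.  A point P2 of the same band whose Delta lies
   within 4cR^2/H of Delta(P1) then lies on the line L1 of P1: the integer
   N = B1 r2 - A1 p2 - C1 q2 satisfies
     N = q2 (B1 (r2/q2 - Y1) + A1 (theta - p2/q2)),  Y1 = ordinate of L1 at theta,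
   and both terms are small, so |N| < 1. *)
Lemma first_window_on_line s t theta c RR H X P1 L1 P2 L2 y1 y2 :
  0 < s -> 0 < t -> s + t = 1 -> 0 < c -> 16 <= RR -> 1 <= X ->
  8 * c * RR ^ 2 * X <= 1 -> 0 < H ->
  fits s t theta c P1 L1 -> fits s t theta c P2 L2 ->
  inDelta t c P1 y1 -> inDelta t c P2 y2 ->
  H / RR <= IZR (pt_q P1) * IZR (ln_B L1) < H ->
  H / RR <= IZR (pt_q P2) * IZR (ln_B L2) < H ->
  IZR (ln_B L1) < X * IZR (ln_B L2) -> IZR (ln_B L2) < X * IZR (ln_B L1) ->
  Rabs (y1 - y2) <= 4 * c * RR ^ 2 / H ->
  passes L1 P2.
Proof.
  intros hs ht hst hc hR hX hcX hH hf1 hf2 hy1 hy2 [hQ1 hQ1'] [hQ2 hQ2'] hb12 hb21 hy12.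
  pose proof (near_line_value _ _ _ _ _ _ _ hc hf1 hy1) as d1.
  pose proof (delta_radius _ _ _ _ _ _ _ hc hf2 hy2) as d2.
  destruct (fits_real _ _ _ _ _ _ hf1) as (q1 & B1 & _ & hA1 & _ & _).
  destruct (fits_real _ _ _ _ _ _ hf2) as (q2 & B2 & _ & _ & _ & hth2).
  rewrite Rpower_1plus in hth2 by lra.
  set (Y1 := line_at theta L1) in *.
  set (Q1 := IZR (pt_q P1)) in *. set (Q2 := IZR (pt_q P2)) in *.
  set (b1 := IZR (ln_B L1)) in *. set (b2 := IZR (ln_B L2)) in *.
  set (r2 := IZR (pt_r P2) / Q2) in *. set (p2 := IZR (pt_p P2) / Q2) in *.
  set (N := (ln_B L1 * pt_r P2 - ln_A L1 * pt_p P2 - ln_C L1 * pt_q P2)%Z).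
  assert (eN : IZR N = Q2 * (b1 * (r2 - Y1) + IZR (ln_A L1) * (theta - p2))).
  { unfold N, Y1, r2, p2, line_at. rewrite !minus_IZR, !mult_IZR. fold b1 Q2. field. split; lra. }
  assert (value : Q2 * b1 * Rabs (r2 - Y1) < c * X + 4 * c * RR ^ 2 * X + 2 * c * RR * X).
  { eapply Rle_lt_trans.
    { apply Rmult_le_compat_l; [nra|].
      replace (r2 - Y1) with ((r2 - y2) + (y2 - y1) + (y1 - Y1)) by ring.
      eapply Rle_trans; [apply Rabs_triang|]. apply Rplus_le_compat_r, Rabs_triang. }
    rewrite (Rabs_minus_sym y2 y1).
    apply (value_term_bound Q1 Q2 b1 b2 c RR X H); try apply Rabs_pos; try lra.
    - apply lt_div_mul; [nra|exact d2].
    - apply le_div_mul; [lra|exact hy12].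
    - apply lt_div_mul; [nra|exact d1].
    - apply (band_ratio RR H X Q1 b1 Q2 b2); lra. }
  assert (slope : Q2 * (Rabs (IZR (ln_A L1)) * Rabs (theta - p2)) < c * (1 + RR * X)).
  { apply (slope_term_bound s Q1 Q2); try apply Rabs_pos; try lra; [apply Rmult_le_pos; lra| |].
    - apply lt_div_mul; [apply Rmult_lt_0_compat; [lra|apply Rpower_pos]|exact hth2].
    - apply (band_ratio RR H X Q2 b2 Q1 b1); lra. }
  (* c X, c and c R X are all at most c R^2 X / 16, so |N| <= 5 c R^2 X < 1 *)
  assert (small : Rabs (IZR N) < 1).
  { rewrite eN, Rabs_mult, (Rabs_right Q2) by lra.
    eapply Rle_lt_trans; [apply Rmult_le_compat_l; [lra|apply Rabs_triang]|].
    rewrite !Rabs_mult, (Rabs_right b1) by lra.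
    assert (cRX : 0 <= c * RR * X) by (apply Rmult_le_pos; [apply Rmult_le_pos|]; lra).
    assert (c * RR * X <= c * RR ^ 2 * X / 16).
    { replace (c * RR ^ 2 * X / 16) with (c * RR * X * (RR / 16)) by (simpl; field).
      rewrite <- (Rmult_1_r (c * RR * X)) at 1. apply Rmult_le_compat_l; lra. }
    assert (c <= c * X) by (rewrite <- (Rmult_1_r c) at 1; apply Rmult_le_compat_l; lra).
    assert (c * X <= c * RR * X).
    { replace (c * RR * X) with (c * X * RR) by ring.
      rewrite <- (Rmult_1_r (c * X)) at 1. apply Rmult_le_compat_l; lra. }
    lra. }
  pose proof (integer_small_zero N small). unfold passes. unfold N in *. lia.
Qed.

Definition in_first_window (t RR H : R) (b : R) : Prop :=
  let lam := 3 / t ^ 2 in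
  let h := Rpower H (t / (1 + t)) in
  h * Rpower RR (- lam) <= b < h.

(* Two points of one band with denominators in the first window and nearby
   Delta's lie on each other's lines, so they coincide or have the same line. *)
Lemma first_window_same_line s t theta c RR H P1 L1 P2 L2 y1 y2 :
  0 < s -> 0 < t -> s + t = 1 -> 0 < c -> 16 <= RR ->
  c <= / 8 * Rpower RR (-2 - 3 / t ^ 2) -> 0 < H ->
  fits s t theta c P1 L1 -> fits s t theta c P2 L2 ->
  inDelta t c P1 y1 -> inDelta t c P2 y2 ->
  H / RR <= IZR (pt_q P1) * IZR (ln_B L1) < H ->
  H / RR <= IZR (pt_q P2) * IZR (ln_B L2) < H ->
  in_first_window t RR H (IZR (ln_B L1)) -> in_first_window t RR H (IZR (ln_B L2)) ->
  Rabs (y1 - y2) <= 4 * c * RR ^ 2 / H ->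
  P1 = P2 \/ L1 = L2.
Proof.
  intros hs ht hst hc hR hcR hH hf1 hf2 hy1 hy2 hb1 hb2 [hw1 hw1'] [hw2 hw2'] hy12.
  set (X := Rpower RR (3 / t ^ 2)).
  assert (X1 : 1 <= X).
  { unfold X. rewrite <- (Rpower_O RR) by lra. apply Rle_Rpower; [lra|].
    apply Rlt_le, Rdiv_lt_0_compat; [lra|apply pow_lt; lra]. }
  assert (Xinv : X * Rpower RR (- (3 / t ^ 2)) = 1).
  { unfold X. rewrite <- Rpower_plus. replace (3 / t ^ 2 + - (3 / t ^ 2)) with 0 by ring.
    apply Rpower_O; lra. }
  (* c <= R^(-2-lambda)/8 is exactly 8 c R^2 X <= 1 *)
  assert (cX : 8 * c * RR ^ 2 * X <= 1).
  { replace (RR ^ 2) with (Rpower RR 2) by (rewrite <- (Rpower_pow 2 RR) by lra; f_equal; simpl; ring).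
    apply Rle_trans with (8 * (/ 8 * Rpower RR (-2 - 3 / t ^ 2)) * Rpower RR 2 * X).
    - apply Rmult_le_compat_r; [lra|]. apply Rmult_le_compat_r; [left; apply Rpower_pos|]. lra.
    - right. unfold X. field_simplify. rewrite <- !Rpower_plus.
      replace (-2 - 3 / t ^ 2 + 2 + 3 / t ^ 2) with 0 by ring. apply Rpower_O; lra. }
  (* both denominators lie in [h / X, h), so they agree up to the factor X *)
  assert (ratio : forall b b', Rpower H (t / (1 + t)) * Rpower RR (- (3 / t ^ 2)) <= b' ->
                    b < Rpower H (t / (1 + t)) -> b < X * b').
  { intros b b' hb' hb. apply Rlt_le_trans with (Rpower H (t / (1 + t))); [exact hb|].
    replace (Rpower H (t / (1 + t)))
      with (X * (Rpower H (t / (1 + t)) * Rpower RR (- (3 / t ^ 2)))) at 1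
      by (rewrite (Rmult_comm (Rpower H _)), <- Rmult_assoc, Xinv; ring).
    apply Rmult_le_compat_l; lra. }
  pose proof (ratio _ _ hw2 hw1') as r12. pose proof (ratio _ _ hw1 hw2') as r21.
  assert (hy21 : Rabs (y2 - y1) <= 4 * c * RR ^ 2 / H) by (rewrite Rabs_minus_sym; auto).
  pose proof (first_window_on_line s t theta c RR H X P1 L1 P2 L2 y1 y2
                hs ht hst hc hR X1 cX hH hf1 hf2 hy1 hy2 hb1 hb2 r12 r21 hy12) as on1.
  pose proof (first_window_on_line s t theta c RR H X P2 L2 P1 L1 y2 y1
                hs ht hst hc hR X1 cX hH hf2 hf1 hy2 hy1 hb2 hb1 r21 r12 hy21) as on2.
  destruct hf1 as ([hP1 _] & hL1 & hp1 & _). destruct hf2 as ([hP2 _] & hL2 & hp2 & _).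
  exact (two_points_one_line P1 P2 L1 L2 hP1 hP2 hL1 hL2 hp1 on1 on2 hp2).
Qed.

(** * Two lines with close ordinates at theta *)

(* Parallel lines whose ordinates at theta differ by less than 1/(B1 B2) coincide:
   the difference is an integer multiple of 1/(B1 B2). *)
Lemma parallel_lines_coincide theta L1 L2 : line_ok L1 -> line_ok L2 ->
  (ln_A L1 * ln_B L2 = ln_A L2 * ln_B L1)%Z ->
  IZR (ln_B L1) * IZR (ln_B L2) * Rabs (line_at theta L1 - line_at theta L2) < 1 ->
  L1 = L2.
Proof.
  intros hL1 hL2 hpar hclose.
  pose proof hL1 as [hB1 _]. pose proof hL2 as [hB2 _].
  apply line_eq_of_proportional; auto.
  destruct (Z.eq_dec (ln_C L1 * ln_B L2 - ln_C L2 * ln_B L1) 0) as [h|h]; [lia|exfalso].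
  set (b1 := IZR (ln_B L1)) in *. set (b2 := IZR (ln_B L2)) in *.
  assert (b1p : 0 < b1) by (apply IZR_lt; lia). assert (b2p : 0 < b2) by (apply IZR_lt; lia).
  assert (gap : b1 * b2 * (line_at theta L1 - line_at theta L2)
                = IZR (ln_C L1 * ln_B L2 - ln_C L2 * ln_B L1)).
  { assert (slope : IZR (ln_A L1) * b2 = IZR (ln_A L2) * b1).
    { unfold b1, b2. rewrite <- !mult_IZR. f_equal. lia. }
    unfold line_at. rewrite minus_IZR, !mult_IZR. fold b1 b2.
    replace (b1 * b2 * ((IZR (ln_A L1) * theta + IZR (ln_C L1)) / b1
                        - (IZR (ln_A L2) * theta + IZR (ln_C L2)) / b2))
      with ((IZR (ln_A L1) * b2 - IZR (ln_A L2) * b1) * theta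
            + (IZR (ln_C L1) * b2 - IZR (ln_C L2) * b1)) by (field; lra).
    rewrite slope. ring. }
  assert (1 <= Rabs (IZR (ln_C L1 * ln_B L2 - ln_C L2 * ln_B L1)))
    by (rewrite <- abs_IZR; apply IZR_le; lia).
  rewrite <- gap, Rabs_mult, (Rabs_right (b1 * b2)) in H by nra. lra.
Qed.

(* Two non-parallel lines meet at the rational point
   ((B1 C2 - B2 C1)/D, (A1 C2 - A2 C1)/D), D = A1 B2 - A2 B1, reduced to a
   denominator q <= |D|. *)
Lemma intersection_point theta L1 L2 : line_ok L1 -> line_ok L2 ->
  (ln_A L1 * ln_B L2 - ln_A L2 * ln_B L1 <> 0)%Z ->
  let d := IZR (Z.abs (ln_A L1 * ln_B L2 - ln_A L2 * ln_B L1)) in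
  let E := Rabs (line_at theta L1 - line_at theta L2) in
  exists P, ratpt P /\ (pt_q P <= Z.abs (ln_A L1 * ln_B L2 - ln_A L2 * ln_B L1))%Z /\
    Rabs (theta - IZR (pt_p P) / IZR (pt_q P)) * d = IZR (ln_B L1) * IZR (ln_B L2) * E /\
    Rabs (IZR (pt_r P) / IZR (pt_q P) - line_at theta L1) * d
      = Rabs (IZR (ln_A L1)) * IZR (ln_B L2) * E.
Proof.
  intros [hB1 _] [hB2 _] hD d E.
  set (D := (ln_A L1 * ln_B L2 - ln_A L2 * ln_B L1)%Z) in *.
  destruct (reduced_point (ln_B L1 * ln_C L2 - ln_B L2 * ln_C L1)
                          (ln_A L1 * ln_C L2 - ln_A L2 * ln_C L1) D hD)
    as (P & hP & hq & ex & ey).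
  exists P. split; [exact hP|split; [exact hq|]].
  set (b1 := IZR (ln_B L1)) in *. set (b2 := IZR (ln_B L2)) in *.
  assert (b1p : 0 < b1) by (apply IZR_lt; lia).
  assert (b2p : 0 < b2) by (apply IZR_lt; lia).
  assert (DR : IZR (ln_A L1) * b2 - IZR (ln_A L2) * b1 <> 0).
  { unfold b1, b2. rewrite <- !mult_IZR, <- minus_IZR. apply not_0_IZR. exact hD. }
  assert (dD : d = Rabs (IZR D)) by apply abs_IZR.
  assert (d1 : 1 <= d) by (apply IZR_le; lia).
  assert (idx : theta - IZR (pt_p P) / IZR (pt_q P) = b1 * b2 * (line_at theta L1 - line_at theta L2) / IZR D).
  { rewrite ex. unfold line_at, D. rewrite !minus_IZR, !mult_IZR. fold b1 b2. field. repeat split; lra. }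
  assert (idy : IZR (pt_r P) / IZR (pt_q P) - line_at theta L1
                = - (IZR (ln_A L1) * b2) * (line_at theta L1 - line_at theta L2) / IZR D).
  { rewrite ey. unfold line_at, D. rewrite !minus_IZR, !mult_IZR. fold b1 b2. field. repeat split; lra. }
  rewrite idx, idy. unfold Rdiv. rewrite !Rabs_mult, Rabs_inv, Rabs_Ropp, Rabs_mult, <- dD.
  rewrite (Rabs_right b1), (Rabs_right b2) by lra. fold E.
  split; field; lra.
Qed.

Lemma intersection_in_C s t theta c L1 L2 y : 0 < s -> 0 < t -> 0 < c ->
  line_ok L1 -> line_ok L2 ->
  (ln_A L1 * ln_B L2 - ln_A L2 * ln_B L1 <> 0)%Z ->
  let d := IZR (Z.abs (ln_A L1 * ln_B L2 - ln_A L2 * ln_B L1)) in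
  let E := Rabs (line_at theta L1 - line_at theta L2) in
  IZR (ln_B L1) * IZR (ln_B L2) * E * Rpower d s < c ->
  2 * Rabs (IZR (ln_A L1)) * IZR (ln_B L2) * E * Rpower d t < c ->
  Rabs (y - line_at theta L1) <= c / (2 * Rpower d (1 + t)) ->
  exists P, inC s theta c P /\ (pt_q P <= Z.abs (ln_A L1 * ln_B L2 - ln_A L2 * ln_B L1))%Z /\
    inDelta t c P y.
Proof.
  intros hs ht hc hL1 hL2 hD d E hx hy hy1.
  destruct (intersection_point theta L1 L2 hL1 hL2 hD) as (P & hP & hq & ex & ey).
  fold d E in ex, ey.
  exists P. split; [split; [exact hP|]|split; [exact hq|]]; unfold inDelta.
  all: pose proof hP as [hq0 _].
  all: set (q := IZR (pt_q P)) in *.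
  all: assert (q1 : 1 <= q) by (apply IZR_le; lia).
  all: assert (qd : q <= d) by (apply IZR_le; exact hq).
  all: assert (powle : forall e, 0 <= e -> Rpower q e <= Rpower d e)
         by (intros e he; apply Rle_Rpower_l; lra).
  all: rewrite !Rpower_1plus by lra.
  - (* |theta - p/q| q q^s <= |theta - p/q| d d^s = B1 B2 E d^s < c *)
    apply lt_div_of_mul; [apply Rmult_lt_0_compat; [lra|apply Rpower_pos]|].
    pose proof (Rabs_pos (theta - IZR (pt_p P) / q)).
    eapply Rle_lt_trans; [|exact hx].
    rewrite <- ex, Rmult_assoc.
    apply Rmult_le_compat_l; [lra|]. apply Rmult_le_compat; try lra.
    + left; apply Rpower_pos.
    + apply powle; lra.
  - (* y ~ Y1 ~ r/q, each within c / (2 d^(1+t)) *)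
    assert (vert : Rabs (IZR (pt_r P) / q - line_at theta L1) < c / (2 * (d * Rpower d t))).
    { apply lt_div_of_mul; [apply Rmult_lt_0_compat; [lra|]; apply Rmult_lt_0_compat; [lra|apply Rpower_pos]|].
      eapply Rle_lt_trans; [|exact hy]. right.
      replace (2 * Rabs (IZR (ln_A L1)) * IZR (ln_B L2) * E * Rpower d t)
        with (2 * (Rabs (IZR (ln_A L1)) * IZR (ln_B L2) * E) * Rpower d t) by ring.
      rewrite <- ey. ring. }
    rewrite Rpower_1plus in hy1 by lra.
    pose proof (Rabs_triang (y - line_at theta L1) (line_at theta L1 - IZR (pt_r P) / q)) as tri.
    replace (y - line_at theta L1 + (line_at theta L1 - IZR (pt_r P) / q))
      with (y - IZR (pt_r P) / q) in tri by ring.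
    rewrite (Rabs_minus_sym (line_at theta L1)) in tri.
    pose proof (Rpower_pos d t). pose proof (Rpower_pos q t).
    assert (c / (d * Rpower d t) <= c / (q * Rpower q t)).
    { apply Rmult_le_compat_l; [lra|]. apply Rinv_le_contravar; [nra|].
      apply Rmult_le_compat; try lra. apply powle; lra. }
    assert (c / (2 * (d * Rpower d t)) + c / (2 * (d * Rpower d t)) = c / (d * Rpower d t))
      by (field; split; lra).
    lra.
Qed.

(** * Exponent bookkeeping for the later windows (k >= 2) *)

Lemma lam_mu_facts (t : R) : 0 < t < 1 ->
  let lam := 3 / t ^ 2 in let mu := 1 / (t * (1 + t)) in
  1 / 2 <= mu /\ 3 * mu <= lam /\ 3 <= lam.
Proof.
  intros [t0 t1] lam mu. repeat split.
  - unfold mu. apply Rmult_le_reg_r with (t * (1 + t)); [nra|].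
    replace (1 / (t * (1 + t)) * (t * (1 + t))) with 1 by (field; lra). nra.
  - unfold mu, lam. apply Rmult_le_reg_r with (t ^ 2 * (1 + t)); [simpl; nra|].
    replace (3 * (1 / (t * (1 + t))) * (t ^ 2 * (1 + t))) with (3 * t) by (field; lra).
    replace (3 / t ^ 2 * (t ^ 2 * (1 + t))) with (3 * (1 + t)) by (field; lra). lra.
  - unfold lam. assert (0 < t ^ 2 <= 1) by (simpl; split; nra).
    apply Rmult_le_reg_r with (t ^ 2); [lra|].
    replace (3 / t ^ 2 * t ^ 2) with 3 by (field; lra). nra.
Qed.

(* The coefficient of log R in the exponent of B1 B2 |Y1 - Y2| |D|^s beats K + 3. *)
Lemma budget_coefficient (s t K : R) : 0 < t < 1 -> s + t = 1 -> 2 <= K ->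
  let lam := 3 / t ^ 2 in let mu := 1 / (t * (1 + t)) in
  K + 3 <= (2 + s * t) * (lam + (K - 2) * mu) - s * s * mu.
Proof.
  intros ht hst hK lam mu.
  destruct (lam_mu_facts t ht) as (mu12 & mulam & lam3). fold lam mu in mu12, mulam, lam3.
  assert (s * s * mu <= mu) by (assert (s * s <= 1) by nra; nra).
  assert (0 <= s * t * (lam + (K - 2) * mu)) by (apply Rmult_le_pos; nra).
  assert (2 * ((K - 2) * mu) >= K - 2) by nra.
  lra.
Qed.

(* All exponent inequalities used for k >= 2, on the logarithmic scale:
   rho = log R, lH = log H_{n+1}, l2 = log 2, K = k, lw = log of the top of the
   k-th window, M = a log-bound for |A_i| B_j and al = log (8 R^{k+1} / H). *)
Lemma window_budget (s t rho lH K l2 : R) :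
  0 < t < 1 -> s + t = 1 -> 0 < l2 -> 4 * l2 <= rho -> 2 <= K -> 0 < lH ->
  let lam := 3 / t ^ 2 in let mu := 1 / (t * (1 + t)) in
  let lw := t / (1 + t) * lH - (lam + (K - 2) * mu) * rho in
  let M := s * lH + t * lw + s * mu * rho in
  let al := 3 * l2 + (K + 1) * rho - lH in
  (1 + t) * (l2 + M) <= lH - K * rho /\
  2 * l2 + rho + (1 + t) * (l2 + M) <= lH /\
  (1 + t) * (l2 + M) + al <= 0 /\
  2 * lw + s * (l2 + M) + al <= 0 /\
  - (3 * l2) + (- 2 - lam) * rho + 2 * lw + al <= 0.
Proof.
  intros [t0 t1] hst hl2 hrho hK hH lam mu lw M al.
  assert (rp : 0 < rho) by lra.
  assert (tinv : 1 < / t) by (rewrite <- Rinv_1; apply Rinv_lt_contravar; lra).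
  assert (e2t : 2 / t = 2 * / t) by (field; lra).
  assert (M1 : (1 + t) * M = lH - (K + 2 + 2 / t) * rho).
  { unfold M, lw, mu, lam. replace s with (1 - t) by lra. field. lra. }
  assert (M2 : 2 * lw + s * M = lH - ((2 + s * t) * (lam + (K - 2) * mu) - s * s * mu) * rho).
  { unfold M, lw. replace s with (1 - t) by lra. field. lra. }
  pose proof (budget_coefficient s t K (conj t0 t1) hst hK) as coef. fold lam mu in coef.
  assert (2 * rho <= 2 / t * rho) by (rewrite e2t; nra).
  assert (0 < s < 1) by lra.
  repeat split.
  - rewrite Rmult_plus_distr_l, M1. nra.
  - rewrite Rmult_plus_distr_l, M1. nra.
  - unfold al. rewrite Rmult_plus_distr_l, M1. nra.
  - unfold al. replace (2 * lw + s * (l2 + M)) with (s * l2 + (2 * lw + s * M)) by ring.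
    rewrite M2. nra.
  - (* here 2 t/(1+t) < 1 and the penalty lam + (K-2) mu outweighs K - 1 *)
    unfold al, lw.
    assert (t / (1 + t) < 1 / 2).
    { apply Rmult_lt_reg_r with (2 * (1 + t)); [lra|].
      replace (t / (1 + t) * (2 * (1 + t))) with (2 * t) by (field; lra). lra. }
    assert (0 < t / (1 + t)) by (apply Rdiv_lt_0_compat; lra).
    destruct (lam_mu_facts t (conj t0 t1)) as (mu12 & _ & lam3). fold lam mu in mu12, lam3.
    assert (K - 1 - 3 * lam - 2 * ((K - 2) * mu) <= 0) by nra.
    assert ((K - 1 - 3 * lam - 2 * ((K - 2) * mu)) * rho <= 0) by nra.
    nra.
Qed.

(** * The later windows (k >= 2) *)

Definition in_window (t RR H : R) (k : nat) (b : R) : Prop :=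
  let lam := 3 / t ^ 2 in
  let mu := 1 / (t * (1 + t)) in
  let h := Rpower H (t / (1 + t)) in
  h * Rpower RR (- lam - INR (k - 1) * mu) <= b < h * Rpower RR (- lam - INR (k - 2) * mu).

Lemma ordinate_gap s t theta c RR H P1 L1 P2 L2 y1 y2 delta : 0 < c -> 0 < RR -> 0 < H ->
  H / RR <= IZR (pt_q P1) * IZR (ln_B L1) -> H / RR <= IZR (pt_q P2) * IZR (ln_B L2) ->
  fits s t theta c P1 L1 -> fits s t theta c P2 L2 ->
  inDelta t c P1 y1 -> inDelta t c P2 y2 -> Rabs (y1 - y2) <= delta ->
  Rabs (line_at theta L1 - line_at theta L2) < delta + 4 * c * RR / H.
Proof.
  intros hc hR hH hb1 hb2 hf1 hf2 hy1 hy2 hy12.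
  pose proof (near_line_value_band _ _ _ _ _ _ _ _ _ hc hR hH hb1 hf1 hy1) as d1.
  pose proof (near_line_value_band _ _ _ _ _ _ _ _ _ hc hR hH hb2 hf2 hy2) as d2.
  pose proof (Rabs_triang (line_at theta L1 - y1) (y1 - y2)).
  pose proof (Rabs_triang (line_at theta L1 - y1 + (y1 - y2)) (y2 - line_at theta L2)).
  replace (line_at theta L1 - y1 + (y1 - y2) + (y2 - line_at theta L2))
    with (line_at theta L1 - line_at theta L2) in * by ring.
  rewrite (Rabs_minus_sym (line_at theta L1) y1) in *.
  unfold Rdiv in *. lra.
Qed.

Section LaterWindow.

Variables (s t theta c RR H : R) (k : nat) (P1 L1 P2 L2 : Z * Z * Z) (y1 y2 : R).
Hypothesis ht : 0 < t < 1.
Hypothesis hst : s + t = 1.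
Hypothesis hc : 0 < c.
Hypothesis hR : 16 <= RR.
Hypothesis hcR : c <= / 8 * Rpower RR (-2 - 3 / t ^ 2).
Hypothesis hk : (2 <= k)%nat.
Hypothesis hf1 : fits s t theta c P1 L1.
Hypothesis hf2 : fits s t theta c P2 L2.
Hypothesis hy1 : inDelta t c P1 y1.
Hypothesis hy2 : inDelta t c P2 y2.
Hypothesis hband1 : H / RR <= IZR (pt_q P1) * IZR (ln_B L1) < H.
Hypothesis hband2 : H / RR <= IZR (pt_q P2) * IZR (ln_B L2) < H.
Hypothesis hw1 : in_window t RR H k (IZR (ln_B L1)).
Hypothesis hw2 : in_window t RR H k (IZR (ln_B L2)).
Hypothesis hy12 : Rabs (y1 - y2) <= 4 * c * RR ^ (k + 1) / H.

(* The logarithmic scale: lw is the log of the top of the window, M bounds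
   log (|A_i| B_j) and al = log (8 R^{k+1} / H) bounds log |Y1 - Y2| - log c. *)
Let rho := ln RR.
Let lH := ln H.
Let l2 := ln 2.
Let K := INR k.
Let lam := 3 / t ^ 2.
Let mu := 1 / (t * (1 + t)).
Let lw := t / (1 + t) * lH - (lam + (K - 2) * mu) * rho.
Let M := s * lH + t * lw + s * mu * rho.
Let al := 3 * l2 + (K + 1) * rho - lH.

(* H exceeds qB >= 1, so log H > 0. *)
Lemma band_height_gt_1 : 1 < H.
Proof.
  destruct (fits_real _ _ _ _ _ _ hf1) as (q1 & b1 & _). nra.
Qed.

Lemma window_exponents :
  (1 + t) * (l2 + M) <= lH - K * rho /\
  2 * l2 + rho + (1 + t) * (l2 + M) <= lH /\
  (1 + t) * (l2 + M) + al <= 0 /\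
  2 * lw + s * (l2 + M) + al <= 0 /\
  - (3 * l2) + (- 2 - lam) * rho + 2 * lw + al <= 0.
Proof.
  assert (l2p : 0 < l2) by (unfold l2; rewrite <- ln_1; apply ln_increasing; lra).
  assert (rho4 : 4 * l2 <= rho).
  { unfold l2, rho. replace (4 * ln 2) with (INR 4 * ln 2) by (simpl; ring).
    rewrite <- ln_pow by lra. apply ln_le; simpl; lra. }
  assert (K2 : 2 <= K) by (unfold K; replace 2 with (INR 2) by (simpl; ring); apply le_INR; lia).
  assert (lHp : 0 < lH) by (unfold lH; rewrite <- ln_1; apply ln_increasing; [lra|apply band_height_gt_1]).
  exact (window_budget s t rho lH K l2 ht hst l2p rho4 K2 lHp).
Qed.

Lemma window_logs b : in_window t RR H k b -> lw - mu * rho <= ln b < lw.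
Proof.
  intros [hlo hhi]. fold lam mu in hlo, hhi.
  assert (ek1 : INR (k - 1) = K - 1) by (unfold K; rewrite minus_INR by lia; simpl; ring).
  assert (ek2 : INR (k - 2) = K - 2) by (unfold K; rewrite minus_INR by lia; simpl; ring).
  rewrite ek1 in hlo. rewrite ek2 in hhi.
  assert (lnw : forall e, ln (Rpower H (t / (1 + t)) * Rpower RR e) = t / (1 + t) * lH + e * rho).
  { intros e. rewrite ln_mult by apply Rpower_pos. rewrite !ln_Rpower. reflexivity. }
  assert (0 < Rpower H (t / (1 + t)) * Rpower RR (- lam - (K - 1) * mu))
    by (apply Rmult_lt_0_compat; apply Rpower_pos).
  split.
  - replace (lw - mu * rho) with (ln (Rpower H (t / (1 + t)) * Rpower RR (- lam - (K - 1) * mu)))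
      by (rewrite lnw; unfold lw; ring).
    apply ln_le; auto.
  - replace lw with (ln (Rpower H (t / (1 + t)) * Rpower RR (- lam - (K - 2) * mu)))
      by (rewrite lnw; unfold lw; ring).
    apply ln_increasing; lra.
Qed.

Lemma window_denominators_small : IZR (ln_B L1) * IZR (ln_B L2) < exp (2 * lw).
Proof.
  destruct (fits_real _ _ _ _ _ _ hf1) as (_ & b1 & _).
  destruct (fits_real _ _ _ _ _ _ hf2) as (_ & b2 & _).
  replace (2 * lw) with (lw + lw) by ring.
  apply mul_lt_exp; try lra; apply exp_ln_lt; try lra; apply window_logs; auto.
Qed.

(* |A| <= q^s with q < H / B <= H R^mu / w, and B' < w, give |A| B' < exp M. *)
Lemma window_slopes_small P L b' : fits s t theta c P L ->
  IZR (pt_q P) * IZR (ln_B L) < H -> in_window t RR H k (IZR (ln_B L)) ->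
  1 <= b' -> in_window t RR H k b' -> Rabs (IZR (ln_A L)) * b' < exp M.
Proof.
  intros hf hQb hw hb' hw'.
  destruct (fits_real _ _ _ _ _ _ hf) as (hQ & hb & _ & hA & _).
  pose proof (window_logs _ hw) as [hlo _]. pose proof (window_logs _ hw') as [_ hhi].
  apply Rle_lt_trans with (Rpower (IZR (pt_q P)) s * b'); [apply Rmult_le_compat_r; lra|].
  unfold Rpower. rewrite <- (exp_ln b') at 1 by lra. rewrite <- exp_plus.
  apply exp_increasing.
  assert (ln (IZR (pt_q P)) + ln (IZR (ln_B L)) < lH)
    by (rewrite <- ln_mult by lra; apply ln_increasing; nra).
  assert (s * ln (IZR (pt_q P)) < s * (lH - (lw - mu * rho))) by (apply Rmult_lt_compat_l; lra).
  unfold M. replace t with (1 - s) by lra. nra.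
Qed.

Lemma window_ordinates_close : Rabs (line_at theta L1 - line_at theta L2) < c * exp al.
Proof.
  assert (hH : 0 < H) by (pose proof band_height_gt_1; lra).
  assert (eal : c * exp al = 8 * c * RR ^ (k + 1) / H).
  { unfold al, Rminus. rewrite !exp_plus, exp_Ropp. unfold lH. rewrite exp_ln by auto.
    replace (3 * l2) with (INR 3 * ln 2) by (unfold l2; simpl; ring).
    replace ((K + 1) * rho) with (INR (k + 1) * ln RR) by (unfold K, rho; rewrite plus_INR; simpl; ring).
    rewrite exp_mul_ln2. change (exp (INR (k + 1) * ln RR)) with (Rpower RR (INR (k + 1))).
    rewrite Rpower_pow by lra. simpl. field. lra. }
  rewrite eal.
  eapply Rlt_le_trans.
  { apply (ordinate_gap s t theta c RR H P1 L1 P2 L2 y1 y2 _ hc ltac:(lra) hH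
           (proj1 hband1) (proj1 hband2) hf1 hf2 hy1 hy2 hy12). }
  assert (RR <= RR ^ (k + 1)) by (rewrite <- (pow_1 RR) at 1; apply Rle_pow; [lra|lia]).
  assert (c * RR <= c * RR ^ (k + 1)) by (apply Rmult_le_compat_l; lra).
  unfold Rdiv. assert (0 < / H) by (apply Rinv_0_lt_compat; lra). nra.
Qed.

(* Parallel lines in the window coincide: B1 B2 |Y1 - Y2| < exp (2 lw) c exp al <= 1. *)
Lemma later_window_parallel : (ln_A L1 * ln_B L2 = ln_A L2 * ln_B L1)%Z -> L1 = L2.
Proof.
  intros hpar.
  destruct hf1 as (_ & hL1 & _). destruct hf2 as (_ & hL2 & _).
  apply (parallel_lines_coincide theta); auto.
  destruct window_exponents as (_ & _ & _ & _ & hexp).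
  assert (cexp : c <= exp (- (3 * l2) + (- 2 - lam) * rho)).
  { eapply Rle_trans; [exact hcR|]. right. rewrite exp_plus, exp_Ropp.
    replace (3 * l2) with (INR 3 * ln 2) by (unfold l2; simpl; ring). rewrite exp_mul_ln2.
    unfold Rpower, rho, lam. simpl. field. }
  pose proof window_denominators_small. pose proof window_ordinates_close.
  destruct (fits_real _ _ _ _ _ _ hf1) as (_ & b1 & _).
  destruct (fits_real _ _ _ _ _ _ hf2) as (_ & b2 & _).
  apply Rlt_le_trans with (exp (2 * lw) * (c * exp al)).
  - apply Rmult_le_0_lt_compat; try apply Rabs_pos; auto; nra.
  - apply Rle_trans with (exp (2 * lw) * (exp (- (3 * l2) + (- 2 - lam) * rho) * exp al)).
    + apply Rmult_le_compat_l; [left; apply exp_pos|].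
      apply Rmult_le_compat_r; [left; apply exp_pos|exact cexp].
    + rewrite <- !exp_plus. apply exp_le_1. lra.
Qed.

(* For non-parallel lines the determinant d = |A1 B2 - A2 B1| is at least 1
   and below |A1| B2 + |A2| B1 < 2 exp M; the four estimates below are the
   hypotheses of [intersection_in_C] and the height bound, each a budget
   inequality of [window_exponents]. *)
Let d := IZR (Z.abs (ln_A L1 * ln_B L2 - ln_A L2 * ln_B L1)).

Lemma window_det_pow : (ln_A L1 * ln_B L2 - ln_A L2 * ln_B L1 <> 0)%Z ->
  forall e, 0 < e -> Rpower d e < exp (e * (l2 + M)).
Proof.
  intros hD e he.
  destruct (fits_real _ _ _ _ _ _ hf1) as (_ & b1 & _).
  destruct (fits_real _ _ _ _ _ _ hf2) as (_ & b2 & _).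
  pose proof (window_slopes_small P1 L1 _ hf1 (proj2 hband1) hw1 b2 hw2) as A1b2.
  pose proof (window_slopes_small P2 L2 _ hf2 (proj2 hband2) hw2 b1 hw1) as A2b1.
  assert (d1 : 1 <= d) by (apply IZR_le; lia).
  assert (hd : d < exp (l2 + M)).
  { rewrite exp_plus. unfold l2. rewrite exp_ln by lra. unfold d.
    rewrite abs_IZR, minus_IZR, !mult_IZR.
    pose proof (Rabs_triang (IZR (ln_A L1) * IZR (ln_B L2)) (- (IZR (ln_A L2) * IZR (ln_B L1)))).
    rewrite Rabs_Ropp, !Rabs_mult, (Rabs_right (IZR (ln_B L1))), (Rabs_right (IZR (ln_B L2))) in H0 by lra.
    unfold Rminus. lra. }
  apply exp_increasing. apply Rmult_lt_compat_l; auto.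
  rewrite <- (ln_exp (l2 + M)). apply ln_increasing; lra.
Qed.

(* B1 B2 E d^s < c exp (2 lw + s (l2 + M) + al) <= c. *)
Lemma window_horizontal_bound : (ln_A L1 * ln_B L2 - ln_A L2 * ln_B L1 <> 0)%Z ->
  IZR (ln_B L1) * IZR (ln_B L2) * Rabs (line_at theta L1 - line_at theta L2) * Rpower d s < c.
Proof.
  intros hD. destruct window_exponents as (_ & _ & _ & bs & _).
  destruct (fits_real _ _ _ _ _ _ hf1) as (_ & b1 & _).
  destruct (fits_real _ _ _ _ _ _ hf2) as (_ & b2 & _).
  apply Rlt_le_trans with (exp (2 * lw) * (c * exp al) * exp (s * (l2 + M))).
  - apply Rmult_le_0_lt_compat;
      [repeat apply Rmult_le_pos; try apply Rabs_pos; lra|left; apply Rpower_pos| |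
       apply window_det_pow; auto; lra].
    apply Rmult_le_0_lt_compat;
      [nra|apply Rabs_pos|exact window_denominators_small|exact window_ordinates_close].
  - replace (exp (2 * lw) * (c * exp al) * exp (s * (l2 + M)))
      with (c * exp (2 * lw + s * (l2 + M) + al)) by (rewrite !exp_plus; ring).
    rewrite <- (Rmult_1_r c) at 2. apply Rmult_le_compat_l; [lra|].
    apply exp_le_1. lra.
Qed.

(* 2 |A1| B2 E d^t < c exp ((1 + t) (l2 + M) + al) <= c. *)
Lemma window_vertical_bound : (ln_A L1 * ln_B L2 - ln_A L2 * ln_B L1 <> 0)%Z ->
  2 * Rabs (IZR (ln_A L1)) * IZR (ln_B L2) * Rabs (line_at theta L1 - line_at theta L2)
    * Rpower d t < c.
Proof.
  intros hD. destruct window_exponents as (_ & _ & bt & _ & _).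
  destruct (fits_real _ _ _ _ _ _ hf2) as (_ & b2 & _).
  pose proof (window_slopes_small P1 L1 _ hf1 (proj2 hband1) hw1 b2 hw2) as A1b2.
  set (a1 := Rabs (IZR (ln_A L1))) in *. assert (0 <= a1) by apply Rabs_pos.
  set (E := Rabs (line_at theta L1 - line_at theta L2)). assert (0 <= E) by apply Rabs_pos.
  apply Rlt_le_trans with (2 * (exp M * (c * exp al)) * exp (t * (l2 + M))).
  - apply Rmult_le_0_lt_compat;
      [repeat apply Rmult_le_pos; lra|left; apply Rpower_pos| |apply window_det_pow; auto; lra].
    replace (2 * a1 * IZR (ln_B L2) * E) with (2 * (a1 * IZR (ln_B L2) * E)) by ring.
    apply Rmult_lt_compat_l; [lra|].
    apply Rmult_le_0_lt_compat; [nra|lra|exact A1b2|exact window_ordinates_close].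
  - replace (2 * (exp M * (c * exp al)) * exp (t * (l2 + M)))
      with (c * exp ((1 + t) * (l2 + M) + al))
      by (replace ((1 + t) * (l2 + M) + al) with (l2 + M + t * (l2 + M) + al) by ring;
          rewrite !exp_plus; unfold l2; rewrite exp_ln by lra; ring).
    rewrite <- (Rmult_1_r c) at 2. apply Rmult_le_compat_l; [lra|].
    apply exp_le_1. lra.
Qed.

(* |y1 - Y1| < 2 c R / H <= c / (2 d^(1+t)), since 4 R d^(1+t) < H. *)
Lemma window_ordinate_bound : (ln_A L1 * ln_B L2 - ln_A L2 * ln_B L1 <> 0)%Z ->
  Rabs (y1 - line_at theta L1) <= c / (2 * Rpower d (1 + t)).
Proof.
  intros hD. destruct window_exponents as (_ & b4 & _ & _ & _).
  assert (hH : 0 < H) by (pose proof band_height_gt_1; lra).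
  pose proof (near_line_value_band s t theta c P1 L1 y1 RR H hc ltac:(lra) hH (proj1 hband1) hf1 hy1).
  assert (h4 : 4 * RR * Rpower d (1 + t) < H).
  { apply Rlt_le_trans with (exp (2 * l2 + rho + (1 + t) * (l2 + M))).
    - rewrite !exp_plus. unfold rho. rewrite exp_ln by lra.
      replace (2 * l2) with (INR 2 * ln 2) by (unfold l2; simpl; ring). rewrite exp_mul_ln2.
      replace (2 ^ 2) with 4 by (simpl; ring). apply Rmult_lt_compat_l; [lra|].
      apply window_det_pow; auto; lra.
    - rewrite <- (exp_ln H) by lra. apply exp_le. fold lH. lra. }
  pose proof (Rpower_pos d (1 + t)).
  left. eapply Rlt_le_trans; [eassumption|].
  apply Rmult_le_reg_r with (2 * Rpower d (1 + t) * H); [nra|].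
  replace (2 * c * RR / H * (2 * Rpower d (1 + t) * H)) with (c * (4 * RR * Rpower d (1 + t))) by (field; lra).
  replace (c / (2 * Rpower d (1 + t)) * (2 * Rpower d (1 + t) * H)) with (c * H) by (field; lra).
  apply Rmult_le_compat_l; lra.
Qed.

(* d^(1+t) < exp ((1 + t)(l2 + M)) <= H / R^k. *)
Lemma window_height_bound : (ln_A L1 * ln_B L2 - ln_A L2 * ln_B L1 <> 0)%Z ->
  Rpower d (1 + t) < H / RR ^ k.
Proof.
  intros hD. destruct window_exponents as (bh & _ & _ & _ & _).
  assert (hH : 0 < H) by (pose proof band_height_gt_1; lra).
  eapply Rlt_le_trans; [apply window_det_pow; auto; lra|].
  replace (H / RR ^ k) with (exp (lH - K * rho)).
  - apply exp_le. lra.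
  - unfold Rminus. rewrite exp_plus, exp_Ropp. unfold lH. rewrite exp_ln by lra.
    change (exp (K * rho)) with (Rpower RR K). unfold K. rewrite Rpower_pow by lra. reflexivity.
Qed.

(* Non-parallel lines in the window meet at a point of C of height below
   H / R^k whose Delta contains y1; this is excluded for y1 in a surviving
   interval. *)
Lemma later_window_nonparallel :
  (forall P, inC s theta c P -> Rpower (IZR (pt_q P)) (1 + t) < H / RR ^ k ->
     ~ inDelta t c P y1) ->
  (ln_A L1 * ln_B L2 - ln_A L2 * ln_B L1 <> 0)%Z -> False.
Proof.
  intros hsurv hD.
  pose proof hf1 as (_ & hL1 & _). pose proof hf2 as (_ & hL2 & _).
  destruct (intersection_in_C s t theta c L1 L2 y1 ltac:(lra) ltac:(lra) hc hL1 hL2 hD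
              (window_horizontal_bound hD) (window_vertical_bound hD) (window_ordinate_bound hD))
    as (P & hC & hq & hdelta).
  apply (hsurv P hC); [|exact hdelta].
  pose proof hC as [[hq0 _] _].
  apply Rle_lt_trans with (Rpower d (1 + t)); [|exact (window_height_bound hD)].
  apply Rle_Rpower_l; [lra|]. split; [apply IZR_lt; lia|apply IZR_le; exact hq].
Qed.

Lemma later_window_same_line :
  (forall P, inC s theta c P -> Rpower (IZR (pt_q P)) (1 + t) < H / RR ^ k ->
     ~ inDelta t c P y1) ->
  L1 = L2.
Proof.
  intros hsurv.
  destruct (Z.eq_dec (ln_A L1 * ln_B L2 - ln_A L2 * ln_B L1) 0) as [hpar|hD].
  - apply later_window_parallel. lia.
  - exfalso. exact (later_window_nonparallel hsurv hD).
Qed.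

End LaterWindow.

Lemma cc_facts kappa l beta t : 0 < kappa -> 0 < l -> 0 < beta < 1 ->
  let c := cc kappa l beta t in
  0 < c /\ c <= l / (4 * Rc beta) /\ c <= / 8 * Rpower (Rc beta) (-2 - 3 / t ^ 2).
Proof.
  intros hk hl hb c. pose proof (Rc_gt_16 beta hb).
  unfold c, cc. repeat split.
  - apply Rmin_pos; auto. apply Rmin_pos.
    + apply Rdiv_lt_0_compat; lra.
    + apply Rmult_lt_0_compat; [lra|apply Rpower_pos].
  - eapply Rle_trans; [apply Rmin_r|apply Rmin_l].
  - eapply Rle_trans; [apply Rmin_r|apply Rmin_r].
Qed.

Lemma Hn_shift c l beta m j : Hn c l beta (m + j) = Hn c l beta m * Rc beta ^ j.
Proof. unfold Hn. rewrite pow_add. ring. Qed.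

Lemma Hn_pos c l beta m : 0 < c -> 0 < l -> 0 < beta < 1 -> 0 < Hn c l beta m.
Proof.
  intros hc hl hb. pose proof (Rc_gt_16 beta hb). unfold Hn.
  apply Rmult_lt_0_compat; [apply Rdiv_lt_0_compat; lra|apply pow_lt; lra].
Qed.

Lemma Cn_band s theta c l beta LP n P : 0 < beta < 1 -> inCn s theta c l beta LP n P ->
  Hn c l beta (S n) / Rc beta <= IZR (pt_q P) * IZR (ln_B (LP P)) < Hn c l beta (S n).
Proof.
  intros hb [_ [h1 h2]]. pose proof (Rc_gt_16 beta hb).
  rewrite mult_IZR in h1, h2. split; auto.
  replace (S n) with (n + 1)%nat by lia. rewrite Hn_shift, pow_1.
  replace (Hn c l beta n * Rc beta / Rc beta) with (Hn c l beta n) by (field; lra). exact h1.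
Qed.

Lemma Cn_near_line s t theta c l beta LP n P y : 0 < c -> 0 < l -> 0 < beta < 1 ->
  LP_ok s t theta c LP -> inCn s theta c l beta LP n P -> inDelta t c P y ->
  Rabs (y - line_at theta (LP P)) < l / Rc beta ^ n / 2.
Proof.
  intros hc hl hb hLP hP hy. pose proof (Rc_gt_16 beta hb).
  pose proof (Hn_pos c l beta (S n) hc hl hb).
  eapply Rlt_le_trans.
  - apply (near_line_value_band s t theta c P (LP P) y (Rc beta) (Hn c l beta (S n))); try lra.
    + apply (Cn_band _ _ _ _ _ _ _ _ hb hP).
    + apply LP_fits; auto. apply hP.
    + exact hy.
  - right. unfold Hn. simpl. field. split; [apply pow_nonzero|]; lra.
Qed.

Lemma survivor_width s t theta c l beta LP I a0 n k tau' ya yb :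
  0 < c -> 0 < l -> 0 < beta < 1 -> I_ok beta a0 l I -> (k <= n)%nat ->
  inS s t theta c l beta LP I (n - k) tau' -> inI (I tau') ya -> inI (I tau') yb ->
  Rabs (ya - yb) <= 4 * c * Rc beta ^ (k + 1) / Hn c l beta (S n).
Proof.
  intros hc hl hb hI hk htau [ha1 ha2] [hb1 hb2]. pose proof (Rc_gt_16 beta hb).
  destruct (inS_vertex _ _ _ _ _ _ _ _ _ _ htau) as [v len].
  pose proof (I_length _ _ _ _ _ hI v) as e. rewrite len in e.
  replace (4 * c * Rc beta ^ (k + 1) / Hn c l beta (S n)) with (l / Rc beta ^ (n - k)).
  - apply Rabs_le. lra.
  - unfold Hn. replace (S n) with ((n - k) + (k + 1))%nat by lia. rewrite (pow_add _ (n - k) (k + 1)).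
    field. repeat split; try lra; apply pow_nonzero; lra.
Qed.

(* Below a vertex of S_N no Delta(P) of a point of C with q^{1+t} < H_{N+1}
   survives: such a P has qB in some band [H_m, H_{m+1}), 1 <= m <= N. *)
Lemma survivor_avoids s t theta c l beta LP I a0 N tau' P y :
  0 < t -> 0 < c -> 0 < l -> 0 < beta < 1 -> c <= l / (4 * Rc beta) ->
  I_ok beta a0 l I -> LP_ok s t theta c LP -> inS s t theta c l beta LP I N tau' ->
  inC s theta c P -> Rpower (IZR (pt_q P)) (1 + t) < Hn c l beta (S N) ->
  inI (I tau') y -> ~ inDelta t c P y.
Proof.
  intros ht hc hl hb hcl hI hLP htau hC hq hy.
  pose proof (Rc_gt_16 beta hb).
  destruct (fits_real _ _ _ _ _ _ (LP_fits _ _ _ _ _ _ hLP hC)) as (q1 & B1 & _ & _ & hBt & _).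
  set (X := IZR (pt_q P * ln_B (LP P))).
  assert (X_le : X <= Rpower (IZR (pt_q P)) (1 + t)).
  { unfold X. rewrite mult_IZR, Rpower_1plus by lra. apply Rmult_le_compat_l; lra. }
  assert (X1 : 1 <= X) by (unfold X; rewrite mult_IZR; nra).
  assert (H1 : Hn c l beta 1 <= 1).
  { unfold Hn. simpl. apply Rmult_le_reg_r with (l / (4 * c)); [apply Rdiv_lt_0_compat; lra|].
    replace (4 * c / l * (Rc beta * 1) * (l / (4 * c))) with (Rc beta) by (field; lra).
    apply Rmult_le_reg_r with (4 * c / l); [apply Rdiv_lt_0_compat; lra|].
    replace (1 * (l / (4 * c)) * (4 * c / l)) with 1 by (field; lra).
    replace (Rc beta * (4 * c / l)) with (c * (4 * Rc beta) / l) by (field; lra).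
    apply Rmult_le_reg_r with l; auto. unfold Rdiv. rewrite Rmult_assoc, Rinv_l, Rmult_1_r by lra.
    apply Rmult_le_reg_r with (/ (4 * Rc beta)); [apply Rinv_0_lt_compat; lra|].
    rewrite Rmult_assoc, Rinv_r, Rmult_1_r by lra. lra. }
  destruct (Hn_band c l beta N X) as (m & hm & hX); [lra|lra|].
  apply (inS_avoids s t theta c l beta LP I a0 N tau' hI htau m P y hm); auto.
  split; auto.
Qed.

(** * The common line and the theorem *)

Lemma shared_line s t theta kappa beta a0 l LP I n k tau' Pa Pb ya yb :
  0 < s -> 0 < t -> s + t = 1 -> 0 < kappa -> 0 < beta < 1 -> 0 < l ->
  LP_ok s t theta (cc kappa l beta t) LP -> I_ok beta a0 l I -> (1 <= k <= n)%nat ->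
  inS s t theta (cc kappa l beta t) l beta LP I (n - k) tau' ->
  inCnk s t theta (cc kappa l beta t) l beta LP n k Pa ->
  inCnk s t theta (cc kappa l beta t) l beta LP n k Pb ->
  inI (I tau') ya -> inI (I tau') yb ->
  inDelta t (cc kappa l beta t) Pa ya -> inDelta t (cc kappa l beta t) Pb yb ->
  LP Pa = LP Pb.
Proof.
  intros hs ht hst hkappa hbeta hl hLP hI hk htau [hCa hwa] [hCb hwb] iya iyb hya hyb.
  destruct (cc_facts kappa l beta t hkappa hl hbeta) as (hc & hcl & hcR).
  set (c := cc kappa l beta t) in *.
  pose proof (Rc_gt_16 beta hbeta) as hR.
  pose proof (Hn_pos c l beta (S n) hc hl hbeta) as hH.
  pose proof (Cn_band _ _ _ _ _ _ _ _ hbeta hCa) as hba.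
  pose proof (Cn_band _ _ _ _ _ _ _ _ hbeta hCb) as hbb.
  pose proof (LP_fits _ _ _ _ _ _ hLP (proj1 hCa)) as hfa.
  pose proof (LP_fits _ _ _ _ _ _ hLP (proj1 hCb)) as hfb.
  pose proof (survivor_width _ _ _ _ _ _ _ _ _ n k _ ya yb hc hl hbeta hI ltac:(lia) htau iya iyb) as hy.
  destruct (Nat.eq_dec k 1) as [->|k1].
  - destruct (first_window_same_line s t theta c (Rc beta) (Hn c l beta (S n))
                Pa (LP Pa) Pb (LP Pb) ya yb hs ht hst hc ltac:(lra) hcR hH
                hfa hfb hya hyb hba hbb hwa hwb hy) as [-> | ?]; auto.
  - rewrite (proj2 (Nat.eqb_neq k 1) k1) in hwa, hwb.
    apply (later_window_same_line s t theta c (Rc beta) (Hn c l beta (S n)) k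
             Pa (LP Pa) Pb (LP Pb) ya yb ltac:(lra) hst hc ltac:(lra) hcR ltac:(lia)
             hfa hfb hya hyb hba hbb hwa hwb hy).
    intros P hC hq.
    apply (survivor_avoids s t theta c l beta LP I a0 (n - k) tau' P ya ht hc hl hbeta hcl
             hI hLP htau hC); auto.
    replace (S n) with (S (n - k) + k)%nat in hq by lia. rewrite Hn_shift in hq.
    replace (Hn c l beta (S (n - k))) with (Hn c l beta (S (n - k)) * Rc beta ^ k / Rc beta ^ k)
      by (field; apply pow_nonzero; lra).
    exact hq.
Qed.

Lemma common_line_cluster s t theta kappa beta a0 l LP I n k tau' P0 y0 P y :
  0 < s -> 0 < t -> s + t = 1 -> 0 < kappa -> 0 < beta < 1 -> 0 < l ->
  LP_ok s t theta (cc kappa l beta t) LP -> I_ok beta a0 l I -> (1 <= k <= n)%nat ->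
  inS s t theta (cc kappa l beta t) l beta LP I (n - k) tau' ->
  inCnk s t theta (cc kappa l beta t) l beta LP n k P0 -> inI (I tau') y0 ->
  inDelta t (cc kappa l beta t) P0 y0 ->
  inCnk s t theta (cc kappa l beta t) l beta LP n k P -> inI (I tau') y ->
  inDelta t (cc kappa l beta t) P y ->
  Rabs (y - line_at theta (LP P0)) < l / Rc beta ^ n / 2.
Proof.
  intros hs ht hst hkappa hbeta hl hLP hI hk htau hP0 hy0 hd0 hP hy hd.
  destruct (cc_facts kappa l beta t hkappa hl hbeta) as (hc & _).
  rewrite (shared_line _ _ _ _ _ _ _ _ _ _ _ _ _ _ _ _ hs ht hst hkappa hbeta hl hLP hI hk htau
             hP0 hP hy0 hy hd0 hd).
  exact (Cn_near_line _ _ _ _ _ _ _ _ _ _ hc hl hbeta hLP (proj1 hP) hd).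
Qed.

Theorem lemma4p3
  (s t theta kappa beta a0 l : R)
  (LP : Z * Z * Z -> Z * Z * Z) (I : list nat -> R * R)
  (hs : 0 < s) (ht : 0 < t) (hst : s + t = 1)
  (hkappa : is_glb (dioph_set s theta) kappa) (hkpos : 0 < kappa)
  (hbeta : 0 < beta < 1) (hl : 0 < l)
  (hLP : LP_ok s t theta (cc kappa l beta t) LP)
  (hI : I_ok beta a0 l I)
  (n k : nat) (hn : (1 <= n)%nat) (hk : (1 <= k <= n)%nat)
  (tau' : list nat)
  (htau' : inS s t theta (cc kappa l beta t) l beta LP I (n - k) tau') :
  let c := cc kappa l beta t in
  let inset (tau : list nat) :=
    vertex beta tau /\ length tau = n /\ prec tau tau' /\
    exists P y, inCnk s t theta c l beta LP n k P /\
                inI (I tau) y /\ inDelta t c P y in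
  forall tau1 tau2 tau3, inset tau1 -> inset tau2 -> inset tau3 ->
    tau1 = tau2 \/ tau1 = tau3 \/ tau2 = tau3.
Proof.
  intros c inset tau1 tau2 tau3 (v1 & len1 & pr1 & P1 & y1 & hP1 & i1 & d1)
    (v2 & len2 & pr2 & P2 & y2 & hP2 & i2 & d2) (v3 & len3 & pr3 & P3 & y3 & hP3 & i3 & d3).
  destruct (inS_vertex _ _ _ _ _ _ _ _ _ _ htau') as [v' _].
  pose proof (I_mono _ _ _ _ _ _ _ hI v1 v' pr1 i1) as i1'.
  pose proof (I_mono _ _ _ _ _ _ _ hI v2 v' pr2 i2) as i2'.
  pose proof (I_mono _ _ _ _ _ _ _ hI v3 v' pr3 i3) as i3'.
  assert (near : forall P y, inCnk s t theta c l beta LP n k P -> inI (I tau') y ->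
            inDelta t c P y -> Rabs (y - line_at theta (LP P1)) < l / Rc beta ^ n / 2)
    by (intros P y; apply (common_line_cluster s t theta kappa beta a0 l LP I n k tau' P1 y1);
        auto).
  (* distinct vertices of height n have side by side intervals of length l/R^n *)
  destruct (list_eq_dec Nat.eq_dec tau1 tau2) as [|n12]; [left; auto|].
  destruct (list_eq_dec Nat.eq_dec tau1 tau3) as [|n13]; [right; left; auto|].
  destruct (list_eq_dec Nat.eq_dec tau2 tau3) as [|n23]; [right; right; auto|].
  exfalso.
  assert (len : forall tau, vertex beta tau -> length tau = n ->
            snd (I tau) - fst (I tau) = l / Rc beta ^ n)
    by (intros tau v e; rewrite <- e; exact (I_length _ _ _ _ _ hI v)).
  apply (three_intervals (l / Rc beta ^ n) (line_at theta (LP P1)) (I tau1) (I tau2) (I tau3)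
           y1 y2 y3 (len _ v1 len1) (len _ v2 len2) (len _ v3 len3) i1 i2 i3
           (near _ _ hP1 i1' d1) (near _ _ hP2 i2' d2) (near _ _ hP3 i3' d3));
    apply (I_separated beta a0 l I); auto; lia.
Qed.
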